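(* Let $\bm\sigma=\sigma_1\bm e_1+\dots+\sigma_r\bm e_r\in\mathbb{Z}^r$ be a changemaker vector with $\sigma_r>1$, let $L=\langle\bm\sigma\rangle^\perp\subseteq\mathbb{Z}^r$, and let $m>1$ be minimal such that $\sigma_m>1$. If $\bm z=\sum z_i\bm e_i\in L$ is irreducible, then $|z_m|\le\sigma_m$.
   Context: $\mathbb{Z}^r$ has the standard pairing. A changemaker vector is $\bm\sigma=\sum\sigma_i\bm e_i$ with $\sigma_1=1$ and $\sigma_{i-1}\le\sigma_i\le1+\sigma_1+\dots+\sigma_{i-1}$. A non-zero $v\in L$ is irreducible if whenever $v=x+y$ with $x,y\in L$ non-zero, $x\cdot y\le-1$. *)

From mathcomp Require Import all_boot all_order all_algebra.
Set Implicit Arguments. Unset Strict Implicit. Unset Printing Implicit Defensive.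
Import Order.TTheory GRing.Theory Num.Theory.
Local Open Scope ring_scope.

(* Vectors of Z^r are finite functions 'I_r -> int; indices are 0-based,
   so paper's e_1..e_r correspond to ord 0 .. r-1. *)
Definition zvec (r : nat) := {ffun 'I_r -> int}.

Definition dot (r : nat) (x y : zvec r) : int := \sum_(i < r) x i * y i.

Definition changemaker (r : nat) (s : zvec r) : Prop :=
  (forall i : 'I_r, (i : nat) = 0%N -> s i = 1) /\
  (forall i j : 'I_r, (j : nat) = i.+1 ->
      s i <= s j /\ s j <= 1 + \sum_(k < r | (k < j)%N) s k).

Definition in_orth (r : nat) (s : zvec r) (v : zvec r) : Prop := dot v s = 0.

Definition irreducible_in (r : nat) (L : zvec r -> Prop) (v : zvec r) : Prop :=
  L v /\ v != 0 /\
  forall x y : zvec r, L x -> L y -> x != 0 -> y != 0 -> v = x + y ->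
    dot x y <= -1.

(* Suppose z_m > sigma_m; the case z_m < -sigma_m follows by applying this to
   -z, which is also irreducible.  Since sigma_i = 1 for i < m, we have
   sigma_m <= 1 + #{i < m}.  In each case below we exhibit y in L with
   y <> 0, y <> z and y.(z - y) >= 0, contradicting irreducibility:
   - at least sigma_m coordinates z_i (i < m) are <= 0: y = e_m - sum_{i in S} e_i
     for sigma_m such indices S;
   - z_a < 0 < z_b for some a, b < m: y = e_b - e_a;
   - z_i <= 0 for all i < m, z_a < 0, and fewer than sigma_m of them: then
     sigma_m = 1 + #{i < m} and y = e_m - sum_{i < m} e_i - e_a;
   - z_i >= 0 for all i < m: as z.sigma = 0 there is a first k > m with
     z_k <= 0, and the changemaker property writes sigma_k - sigma_m as
     sum_{i in U} sigma_i with U a set of indices below k; take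
     y = e_m + sum_{i in U} e_i - e_k.
   In every case y.(z - y) is bounded below coordinatewise. *)

From mathcomp Require Import all_boot all_order all_algebra.
From mathcomp Require Import zify.
Import Order.TTheory GRing.Theory Num.Theory.
Local Open Scope ring_scope.
Set Implicit Arguments. Unset Strict Implicit.

Section Changemaker.

Variables (r : nat) (s : zvec r.+1).
Hypothesis cm : changemaker s.

Lemma changemaker0 : s ord0 = 1.
Proof. by case: cm => s0 _; apply: s0. Qed.

Lemma changemaker_le_sum (j : 'I_r.+1) :
  s j <= 1 + \sum_(k < r.+1 | (k < j)%N) s k.
Proof.
case: cm => s0 sS; have [j0|j_gt0] := posnP j.
  by rewrite s0 // big_pred0 ?addr0 // => k; rewrite j0 ltn0.
have j1_lt : (j.-1 < r.+1)%N by rewrite (leq_ltn_trans (leq_pred j)).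
by case: (sS (Ordinal j1_lt) j (esym (prednK j_gt0))).
Qed.

Lemma changemaker_mono (i j : 'I_r.+1) : (i <= j)%N -> s i <= s j.
Proof.
case: cm => _ sS /subnKC; move: (j - i)%N => d; elim: d j => [|d IH] j jE.
  by rewrite (_ : j = i) //; apply: val_inj; rewrite /= -jE addn0.
have lt_r : (i + d < r.+1)%N by rewrite (leq_trans _ (ltn_ord j)) // -jE addnS.
have j_succ : j = (i + d).+1 :> nat by rewrite -jE addnS.
apply: le_trans (IH (Ordinal lt_r) erefl) _.
by case: (sS (Ordinal lt_r) j j_succ).
Qed.

Lemma changemaker_ge1 (i : 'I_r.+1) : 1 <= s i.
Proof. by rewrite -changemaker0 changemaker_mono. Qed.

Lemma changemaker_subset_sum (n : nat) (N : int) : (n <= r.+1)%N ->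
  0 <= N <= \sum_(k < r.+1 | (k < n)%N) s k ->
  exists2 U : {set 'I_r.+1},
    U \subset [set k : 'I_r.+1 | (k < n)%N] & \sum_(k in U) s k = N.
Proof.
elim: n N => [|n IH] N n_le /andP[N_ge0 N_le].
  exists set0; first exact: sub0set.
  by move: N_le; rewrite big_set0 big_pred0 //; lia.
pose k := Ordinal n_le.
have sum_ltS : \sum_(i < r.+1 | (i < n.+1)%N) s i
               = s k + \sum_(i < r.+1 | (i < n)%N) s i.
  rewrite (bigD1 k) //=; congr (_ + _); apply: eq_bigl => i.
  by rewrite ltnS leq_eqVlt -val_eqE /=; case: ltngtP.
have lt_S : [set i : 'I_r.+1 | (i < n)%N] \subset [set i : 'I_r.+1 | (i < n.+1)%N].
  by apply/subsetP => i; rewrite !inE => /ltnW.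
have [N_le'|N_gt] := lerP N (\sum_(i < r.+1 | (i < n)%N) s i).
  have [|U sub_U sum_U] := IH N (ltnW n_le); first by rewrite N_ge0.
  by exists U; first exact: subset_trans lt_S.
have [|U sub_U sum_U] := IH (N - s k) (ltnW n_le).
  rewrite subr_ge0 lerBlDl -sum_ltS N_le andbT.
  by apply: le_trans (changemaker_le_sum k) _; rewrite lez1D.
have kU : k \notin U by apply/negP => /(subsetP sub_U); rewrite inE ltnn.
exists (k |: U); last by rewrite big_setU1 //= sum_U addrC subrK.
by rewrite subUset sub1set inE ltnSn (subset_trans sub_U lt_S).
Qed.

End Changemaker.

Section Dot.

Variable n : nat.
Implicit Types (x y w z : zvec n) (A : {set 'I_n}).

Definition chi A : zvec n := [ffun i => (i \in A : nat)%:Z].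

Lemma dot_chil A w : dot (chi A) w = \sum_(i in A) w i.
Proof.
rewrite /dot [RHS]big_mkcond; apply: eq_bigr => i _.
by rewrite ffunE; case: (i \in A); rewrite ?mul1r ?mul0r.
Qed.

Lemma sum_chi A : \sum_i chi A i = #|A|%:Z.
Proof.
rewrite -natz -sumr_const [RHS]big_mkcond; apply: eq_bigr => i _.
by rewrite ffunE; case: (i \in A).
Qed.

Lemma dotDl x y w : dot (x + y) w = dot x w + dot y w.
Proof. by rewrite /dot -big_split; apply: eq_bigr => i _; rewrite ffunE mulrDl. Qed.

Lemma dotNl x w : dot (- x) w = - dot x w.
Proof. by rewrite /dot -sumrN; apply: eq_bigr => i _; rewrite ffunE mulNr. Qed.

Lemma dotNr x w : dot x (- w) = - dot x w.
Proof. by rewrite /dot -sumrN; apply: eq_bigr => i _; rewrite ffunE mulrN. Qed.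

Lemma dotBl x y w : dot (x - y) w = dot x w - dot y w.
Proof. by rewrite dotDl dotNl. Qed.

Variable s : zvec n.

Lemma in_orthN x : in_orth s x -> in_orth s (- x).
Proof. by rewrite /in_orth dotNl => ->; rewrite oppr0. Qed.

Lemma in_orthB x y : in_orth s x -> in_orth s y -> in_orth s (x - y).
Proof. by rewrite /in_orth dotBl => -> ->; rewrite subrr. Qed.

Lemma irreducibleN z :
  irreducible_in (in_orth s) z -> irreducible_in (in_orth s) (- z).
Proof.
case=> Lz [z_neq0 z_irr]; split; first exact: in_orthN.
split=> [|x y Lx Ly x_neq0 y_neq0 zE]; first by rewrite oppr_eq0.
rewrite -[dot x y]opprK -dotNl -dotNr.
apply: z_irr; rewrite ?oppr_eq0 //; try exact: in_orthN.
by rewrite -opprD -zE opprK.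
Qed.

Definition nonneg_split z y :=
  [/\ in_orth s y, y != 0, y != z & 0 <= dot y (z - y)].

Lemma irreducible_nonneg_split z y :
  irreducible_in (in_orth s) z -> ~ nonneg_split z y.
Proof.
case=> Lz [_ z_irr] [Ly y_neq0 y_neqz dot_ge0].
have zy_neq0 : z - y != 0 by rewrite subr_eq0 eq_sym.
have := z_irr y (z - y) Ly (in_orthB Lz Ly) y_neq0 zy_neq0.
by rewrite addrC subrK => /(_ erefl) /(le_trans dot_ge0).
Qed.

End Dot.

Section CoordinateBound.

Variables (r : nat) (s : zvec r.+1) (m : 'I_r.+1) (z : zvec r.+1).
Hypothesis cm : changemaker s.
Hypothesis s_below : forall j : 'I_r.+1, (j < m)%N -> s j = 1.
Hypotheses (s_m_gt1 : 1 < s m) (z_orth : in_orth s z) (z_m_gt : s m < z m).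

Let below : {set 'I_r.+1} := [set i : 'I_r.+1 | (i < m)%N].
Let nonpos_below : {set 'I_r.+1} := [set i in below | z i <= 0].

Lemma sum_below (A : {set 'I_r.+1}) :
  A \subset below -> \sum_(i in A) s i = #|A|%:Z.
Proof.
move=> A_sub; rewrite -natz -sumr_const; apply: eq_bigr => i /(subsetP A_sub).
by rewrite inE; apply: s_below.
Qed.

Lemma s_m_le_card_below : s m <= #|below|%:Z + 1.
Proof.
have := changemaker_le_sum cm m.
rewrite (eq_bigl (fun i => i \in below)) => [|i]; last by rewrite inE.
by rewrite sum_below // addrC.
Qed.

Lemma nonneg_split_of_coord (y : zvec r.+1) :
  in_orth s y -> 0 < y m < z m -> 0 <= dot y (z - y) -> nonneg_split s z y.
Proof.
move=> Ly /andP[ym_gt0 ym_lt] dot_ge0; split=> //.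
  by apply: contraTneq ym_gt0 => ->; rewrite ffunE ltxx.
by apply: contraTneq ym_lt => ->; rewrite ltxx.
Qed.

Lemma split_many_nonpos :
  s m <= #|nonpos_below|%:Z -> exists y, nonneg_split s z y.
Proof.
move=> le_card.
have [S S_sub S_card] :
    exists2 S : {set 'I_r.+1}, S \subset nonpos_below & #|S|%:Z = s m.
  have /card_geqP[sq [sq_uniq sq_size sq_sub]] : (`|s m| <= #|nonpos_below|)%N.
    by rewrite -lez_nat gez0_abs //; lia.
  exists [set i in sq]; first by apply/subsetP => i; rewrite inE => /sq_sub.
  by rewrite cardsE (card_uniqP sq_uniq) sq_size gez0_abs //; lia.
have S_below : S \subset below.
  by apply: subset_trans S_sub _; apply/subsetP => i; rewrite inE => /andP[].
have mS : m \notin S by apply: contra (subsetP S_below m) _; rewrite inE ltnn.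
exists (chi [set m] - chi S); apply: nonneg_split_of_coord.
- by rewrite /in_orth dotBl !dot_chil big_set1 sum_below // S_card subrr.
- by rewrite !ffunE inE eqxx (negbTE mS) /=; lia.
have pt i : (z m - 1) * chi [set m] i - chi S i
            <= (chi [set m] - chi S) i * (z - (chi [set m] - chi S)) i.
  rewrite !ffunE !inE; case: eqVneq => [->|_]; first by rewrite (negbTE mS) /=; lia.
  case: (boolP (i \in S)) => [/(subsetP S_sub)|_] /=; last by lia.
  by rewrite inE => /andP[_]; lia.
rewrite /dot; apply: le_trans (ler_sum _ (fun i _ => pt i)).
by rewrite sumrB -mulr_sumr !sum_chi cards1 S_card; lia.
Qed.

Lemma split_sign_change (a b : 'I_r.+1) : (a < m)%N -> (b < m)%N ->
  z a < 0 -> 0 < z b -> exists y, nonneg_split s z y.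
Proof.
move=> a_lt b_lt za_lt0 zb_gt0; exists (chi [set b] - chi [set a]); split.
- by rewrite /in_orth dotBl !dot_chil !big_set1 (s_below a_lt) (s_below b_lt) subrr.
- apply: contraTneq zb_gt0 => /(congr1 (fun v : zvec r.+1 => v b)).
  rewrite !ffunE !inE eqxx; case: eqVneq => [->|_] /=; lia.
- apply: contraTneq z_m_gt => /(congr1 (fun v : zvec r.+1 => v m)).
  rewrite !ffunE !inE -!val_eqE /= (gtn_eqF a_lt) (gtn_eqF b_lt) /=.
  have := changemaker_ge1 cm m; lia.
apply: sumr_ge0 => i _; rewrite !ffunE !inE.
by case: eqVneq => [->|_]; case: eqVneq => [->|_] /=; lia.
Qed.

Lemma split_nonpos_below (a : 'I_r.+1) : (a < m)%N -> z a < 0 ->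
  (forall i : 'I_r.+1, (i < m)%N -> z i <= 0) ->
  #|nonpos_below|%:Z < s m -> exists y, nonneg_split s z y.
Proof.
move=> a_lt za_lt0 z_below card_lt.
have below_eq : nonpos_below = below.
  by apply/setP => i; rewrite !inE andb_idr // => /z_below.
have s_m_eq : s m = #|below|%:Z + 1.
  by have := s_m_le_card_below; rewrite below_eq in card_lt; lia.
have am : (a == m) = false by rewrite -val_eqE /= ltn_eqF.
exists (chi [set m] - chi below - chi [set a]); apply: nonneg_split_of_coord.
- rewrite /in_orth !dotBl !dot_chil !big_set1 sum_below // (s_below a_lt).
  by rewrite s_m_eq; lia.
- by rewrite !ffunE !inE eqxx ltnn eq_sym am /=; lia.
have pt i : (z m - 1) * chi [set m] i - chi below i - chi [set a] i
  <= (chi [set m] - chi below - chi [set a]) i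
     * (z - (chi [set m] - chi below - chi [set a])) i.
  rewrite !ffunE !inE; case: eqVneq => [->|_]; first by rewrite ltnn eq_sym am /=; lia.
  case: eqVneq => [->|_]; first by rewrite a_lt /=; lia.
  by case: ltnP => [/z_below|] /=; lia.
rewrite /dot; apply: le_trans (ler_sum _ (fun i _ => pt i)).
by rewrite !sumrB -mulr_sumr !sum_chi !cards1; lia.
Qed.

Lemma exists_nonpos_above : (forall i : 'I_r.+1, (i < m)%N -> 0 <= z i) ->
  exists k : 'I_r.+1, (m < k)%N && (z k <= 0).
Proof.
move=> z_below; apply/existsP/contraT; rewrite negb_exists => /forallP z_above.
have z_ge0 i : i != m -> 0 <= z i.
  move=> im; case: (ltngtP i m) => [/z_below //|m_lt_i|/val_inj i_eq].
    by have := z_above i; rewrite m_lt_i /= -ltNge => /ltW.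
  by rewrite i_eq eqxx in im.
have sum_ge0 : 0 <= \sum_(i | i != m) z i * s i.
  apply: sumr_ge0 => i /z_ge0 zi_ge0.
  by rewrite mulr_ge0 // (le_trans ler01) ?changemaker_ge1.
have zs_m_gt0 : 0 < z m * s m by apply: mulr_gt0; lia.
have : 0 < dot z s by rewrite /dot (bigD1 m) //= ltr_wpDr.
by rewrite z_orth ltxx.
Qed.

Lemma split_nonneg_below : (forall i : 'I_r.+1, (i < m)%N -> 0 <= z i) ->
  #|nonpos_below|%:Z < s m -> exists y, nonneg_split s z y.
Proof.
move=> z_below card_lt; have [k0 k0P] := exists_nonpos_above z_below.
case: (@arg_minnP _ k0 (fun k => (m < k)%N && (z k <= 0)) val k0P).
move=> k /andP[m_lt_k zk_le0] k_min.
have z_between (i : 'I_r.+1) : (m < i)%N -> (i < k)%N -> 0 < z i.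
  move=> m_lt_i i_lt_k; rewrite ltNge; apply: contraTN i_lt_k => zi_le0.
  by rewrite -leqNgt k_min // m_lt_i.
have [|U U_sub U_sum] :=
    changemaker_subset_sum cm (N := s k - s m) (ltnW (ltn_ord k)).
  rewrite subr_ge0 lerBlDl (changemaker_mono cm (ltnW m_lt_k)) /=.
  by apply: le_trans (changemaker_le_sum cm k) _; rewrite lerD2r changemaker_ge1.
have kU : k \notin U by apply: contra (subsetP U_sub k) _; rewrite inE ltnn.
have mk : (m == k) = false by rewrite -val_eqE /= ltn_eqF.
pose y := chi [set m] + chi U - chi [set k].
exists y; apply: nonneg_split_of_coord.
- rewrite /in_orth dotBl dotDl !dot_chil !big_set1 U_sum.
  by rewrite (addrC (s m)) subrK subrr.
- by rewrite !ffunE !inE eqxx mk; case: (m \in U) => /=; lia.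
have pt i : (z m - 1) * chi [set m] i - chi [set k] i - chi nonpos_below i
            <= y i * (z - y) i.
  rewrite !ffunE !inE; case: eqVneq => [->|im].
    by rewrite mk ltnn /=; case: (m \in U) => /=; lia.
  case: eqVneq => [->|ik]; first by rewrite (negbTE kU) ltnNge (ltnW m_lt_k) /=; lia.
  case: (boolP (i \in U)) => [iU|_] /=; last by case: (_ && _) => /=; lia.
  have := subsetP U_sub i iU; rewrite inE => i_lt_k.
  case: ltngtP => [/z_below|/z_between/(_ i_lt_k)|/val_inj] /=; try lia.
  by move/eqP: im.
rewrite /dot; apply: le_trans (ler_sum _ (fun i _ => pt i)).
by rewrite !sumrB -mulr_sumr !sum_chi !cards1; lia.
Qed.

Lemma exists_nonneg_split : exists y, nonneg_split s z y.
Proof.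
have [/split_many_nonpos //|card_lt] := lerP (s m) #|nonpos_below|%:Z.
case: (boolP [exists a : 'I_r.+1, (a < m)%N && (z a < 0)]).
  case/existsP => a /andP[a_lt za_lt0].
  case: (boolP [exists b : 'I_r.+1, (b < m)%N && (0 < z b)]).
    case/existsP => b /andP[b_lt zb_gt0].
    exact: split_sign_change a_lt b_lt za_lt0 zb_gt0.
  rewrite negb_exists => /forallP no_pos.
  apply: split_nonpos_below a_lt za_lt0 _ card_lt.
  by move=> i i_lt; have := no_pos i; rewrite i_lt /= -leNgt.
rewrite negb_exists => /forallP no_neg; apply: split_nonneg_below card_lt.
by move=> i i_lt; have := no_neg i; rewrite i_lt /= -leNgt.
Qed.

End CoordinateBound.

Theorem lemma7p3 (r : nat) (sigma : zvec r.+1) (m : 'I_r.+1) (z : zvec r.+1) :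
  changemaker sigma ->
  1 < sigma ord_max ->
  1 < sigma m ->
  (forall j : 'I_r.+1, (j < m)%N -> ~ (1 < sigma j)) ->
  irreducible_in (in_orth sigma) z ->
  `|z m| <= sigma m.
Proof.
(* [1 < sigma ord_max] is implied by [1 < sigma m] and monotonicity. *)
move=> cm _ sigma_m_gt1 below_le1 z_irr.
have sigma_below (j : 'I_r.+1) : (j < m)%N -> sigma j = 1.
  by move=> /below_le1; have := changemaker_ge1 cm j; lia.
have coord_le w : irreducible_in (in_orth sigma) w -> w m <= sigma m.
  move=> w_irr; rewrite leNgt; apply/negP => w_m_gt.
  have [y] := exists_nonneg_split cm sigma_below sigma_m_gt1 w_irr.1 w_m_gt.
  exact: irreducible_nonneg_split w_irr.
have := coord_le _ (irreducibleN z_irr); rewrite ffunE => Nz_le.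
by rewrite ler_norml coord_le // andbT lerNl.
Qed.
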